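(* (1) Let $A,B$ be irreducible $\{0,1\}$-matrices which are not permutation matrices. If the one-sided topological Markov shifts $(X_A,\sigma_A)$ and $(X_B,\sigma_B)$ are topologically conjugate, then they are coded equivalent. (2) Let $A$ be an irreducible non-permutation $\{0,1\}$-matrix and let $\mathcal{C}\subset B_*(X_A)$ be a right Markov code for $(X_A,\sigma_A)$. Then $(X_A,\sigma_A)$ and $(X_{A(\mathcal{C})},\sigma_{A(\mathcal{C})})$ are coded equivalent.
   Context: For an $N\times N$ matrix $A$ with entries in $\{0,1\}$, $\Sigma_A=\{1,\dots,N\}$, $X_A$ is the set of sequences $(x_n)_{n\in\mathbb{N}}$ in $\Sigma_A$ with $A(x_n,x_{n+1})=1$ for all $n$, with product topology and shift $\sigma_A$. $B_k(X_A)$ is the set of admissible words of length $k$, $B_*(X_A)$ the union over $k\ge0$ (including the empty word). For a word $w=w_1\cdots w_\ell$, $\sigma_A(w)=w_2\cdots w_\ell$. A code is a nonempty $\mathcal{C}\subset B_*(X_A)$ such that any equality of concatenations $\omega(i_1)\cdots\omega(i_k)=\omega(j_1)\cdots\omega(j_n)$ of words of $\mathcal{C}$ forces $n=k$ and $\omega(i_m)=\omega(j_m)$ for all $m$; a prefix code is a code in which no word is a prefix of another. A finite prefix code $\mathcal{C}=\{\omega(1),\dots,\omega(M)\}\subset B_*(X_A)$, $\Sigma_{A(\mathcal{C})}=\{1,\dots,M\}$, is a right Markov code for $(X_A,\sigma_A)$ if: (i) for every $\gamma\in B_*(X_A)$ there is $\eta\in B_*(X_A)$ with $\gamma\eta\in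 B_*(X_A)$ and a unique finite sequence $(i_1,\dots,i_k)$ in $\Sigma_{A(\mathcal{C})}$ with $\gamma\eta=\omega(i_1)\cdots\omega(i_k)$; (ii) there is $L\in\mathbb{N}$ such that for all $i_1,\dots,i_L$ with $\omega(i_1)\cdots\omega(i_L)\in B_*(X_A)$ there exist $j_1,\dots,j_k\in\Sigma_{A(\mathcal{C})}$ with $\sigma_A(\omega(i_1))\omega(i_2)\cdots\omega(i_L)=\omega(j_1)\cdots\omega(j_k)$; (iii) for every $i,j$ there are $n_1,\dots,n_l$ with $\omega(i)\omega(n_1)\cdots\omega(n_l)\omega(j)\in B_*(X_A)$. The trivial right Markov code is $\Sigma_A$ itself (all words of length 1). $A(\mathcal{C})(i,j)=A(r(\omega(i)),s(\omega(j)))$, where $s,r$ give the first and last symbols. Topological conjugacy of $(X_A,\sigma_A)$ and $(X_B,\sigma_B)$: a homeomorphism $h:X_A\to X_B$ with $h\circ\sigma_A=\sigma_B\circ h$. For irreducible non-permutation $A,B$, the shifts are elementary coded equivalent if there exist right Markov codes $\mathcal{C}_1$ for $(X_A,\sigma_A)$ and $\mathcal{C}_2$ for $(X_B,\sigma_B)$ with $(X_{A(\mathcal{C}_1)},\sigma_{A(\mathcal{C}_1)})$ and $(X_{B(\mathcal{C}_2)},\sigma_{B(\mathcal{C}_2)})$ topologically conjugate; coded equivalent if there is a finite chain $A=A_0,\dots,A_m=B$ of irreducible non-permutation $\{0,1\}$-matrices with consecutive shifts elementary coded equivalent. *)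

From mathcomp Require Import all_boot all_fingroup.
From mathcomp Require Import matrix.

Set Implicit Arguments.
Unset Strict Implicit.
Unset Printing Implicit Defensive.

Definition zo_mat (N : nat) := 'M[bool]_N.

(* Admissible (finite) words, including the empty word: B_*(X_A). *)
Definition adm (N : nat) (A : zo_mat N) (w : seq 'I_N) : bool :=
  sorted (fun a b => A a b) w.

Definition irreducible (N : nat) (A : zo_mat N) : Prop :=
  forall i j : 'I_N, exists w : seq 'I_N, adm A (i :: rcons w j).

Definition is_perm_matrix (N : nat) (A : zo_mat N) : Prop :=
  exists s : {perm 'I_N}, forall i j, A i j = (s i == j).

Definition irr_nonperm (N : nat) (A : zo_mat N) : Prop :=
  irreducible A /\ ~ is_perm_matrix A.

Definition inX (N : nat) (A : zo_mat N) (x : nat -> 'I_N) : Prop :=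
  forall n, A (x n) (x n.+1).

Definition XA (N : nat) (A : zo_mat N) := {x : nat -> 'I_N | inX A x}.

Lemma inX_shift (N : nat) (A : zo_mat N) (x : XA A) :
  inX A (fun n => proj1_sig x n.+1).
Proof. by case: x => x Hx n; apply: Hx. Qed.

Definition shiftX (N : nat) (A : zo_mat N) (x : XA A) : XA A :=
  exist _ (fun n => proj1_sig x n.+1) (inX_shift x).

(* Continuity for the (subspace of the) product topology of discrete spaces:
   cylinder sets form a basis. *)
Definition cont_map (N M : nat) (A : zo_mat N) (B : zo_mat M)
  (h : XA A -> XA B) : Prop :=
  forall (x : XA A) (n : nat), exists m : nat, forall y : XA A,
    (forall k, k < m -> proj1_sig y k = proj1_sig x k) ->
    forall k, k < n -> proj1_sig (h y) k = proj1_sig (h x) k.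

Definition top_conj (N M : nat) (A : zo_mat N) (B : zo_mat M) : Prop :=
  exists (h : XA A -> XA B) (g : XA B -> XA A),
    cancel h g /\ cancel g h /\ cont_map h /\ cont_map g /\
    forall x : XA A, h (shiftX x) = shiftX (h x).

Definition concat_code (N M : nat) (om : 'I_M -> seq 'I_N) (s : seq 'I_M)
  : seq 'I_N := flatten (map om s).

(* A finite prefix code C = {om 1, ..., om M} (distinct words) which is a
   right Markov code for (X_A, sigma_A). *)
Definition right_markov_code (N : nat) (A : zo_mat N) (M : nat)
  (om : 'I_M -> seq 'I_N) : Prop :=
  [/\ 0 < M /\
      injective om,
      (forall i, adm A (om i)),
      (forall s t : seq 'I_M,
         concat_code om s = concat_code om t -> s = t),
      (forall i j : 'I_M, i != j -> ~~ prefix (om i) (om j))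
    & [/\
        (forall gamma : seq 'I_N, adm A gamma ->
           exists eta : seq 'I_N, adm A (gamma ++ eta) /\
             exists! s : seq 'I_M, gamma ++ eta = concat_code om s),
        (* (ii): here s = (i_2, ..., i_L), so size s = L - 1 *)
        (exists L : nat, forall (i : 'I_M) (s : seq 'I_M), size s = L ->
           adm A (om i ++ concat_code om s) ->
           exists t : seq 'I_M, behead (om i) ++ concat_code om s = concat_code om t)
      &
        (forall i j : 'I_M, exists s : seq 'I_M,
           adm A (om i ++ concat_code om s ++ om j))]].

Definition s_sym (N : nat) (w : seq 'I_N) : option 'I_N :=
  if w is a :: _ then Some a else None.
Definition r_sym (N : nat) (w : seq 'I_N) : option 'I_N := s_sym (rev w).

Definition code_mat (N : nat) (A : zo_mat N) (M : nat)
  (om : 'I_M -> seq 'I_N) : zo_mat M :=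
  (\matrix_(i < M, j < M)
    match r_sym (om i), s_sym (om j) with
    | Some a, Some b => A a b
    | _, _ => false
    end)%R.

Definition zmat := {N : nat & zo_mat N}.
Definition mkz (N : nat) (A : zo_mat N) : zmat := existT _ N A.

Definition irr_np (a : zmat) : Prop := irr_nonperm (projT2 a).

Definition elem_coded_equiv (a b : zmat) : Prop :=
  irr_np a /\ irr_np b /\
  exists (M1 : nat) (om1 : 'I_M1 -> seq 'I_(projT1 a))
         (M2 : nat) (om2 : 'I_M2 -> seq 'I_(projT1 b)),
    right_markov_code (projT2 a) om1 /\ right_markov_code (projT2 b) om2 /\
    top_conj (code_mat (projT2 a) om1) (code_mat (projT2 b) om2).

Inductive coded_chain : zmat -> zmat -> Prop :=
| cc_nil a : irr_np a -> coded_chain a a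
| cc_cons a b c : elem_coded_equiv a b -> coded_chain b c -> coded_chain a c.

Definition coded_equiv (N M : nat) (A : zo_mat N) (B : zo_mat M) : Prop :=
  coded_chain (mkz A) (mkz B).

(* Both parts are instances of elementary coded equivalence in one step: in
   (1) take the trivial code on both sides, in (2) the code C for A and the
   trivial code for A(C), which makes the recoded shifts equal.  The content
   is that A(C) is again irreducible and not a permutation matrix.  If A(C)
   were a permutation matrix, code sequences starting with the same codeword
   would be determined by it, so their concatenations would be
   prefix-comparable.  A branching vertex of A yields M + 1 pairwise
   prefix-incomparable admissible words; completing each to a concatenation
   of codewords by (i), two of them share a first codeword, a contradiction. *)

From mathcomp Require Import all_boot all_fingroup.
From mathcomp Require Import matrix.

Set Implicit Arguments.
Unset Strict Implicit.
Unset Printing Implicit Defensive.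

Lemma prefix_total_of_prefix (T : eqType) (u v w : seq T) :
  prefix u w -> prefix v w -> prefix u v || prefix v u.
Proof.
elim: u v w => [|a u IH] [|b v] [|x w] //=; rewrite ?prefix0s ?orbT //.
by case/andP=> /eqP-> pu /andP[/eqP-> pv]; rewrite eqxx /=; apply: IH pu pv.
Qed.

Lemma path_prefix_total (T : eqType) (e : rel T) :
  (forall x y z, e x y -> e x z -> y = z) ->
  forall x s t, path e x s -> path e x t -> prefix s t || prefix t s.
Proof.
move=> e_fun x s; elim: s x => [|y s IH] x [|z t] //=; rewrite ?prefix0s ?orbT //.
case/andP=> exy ps /andP[exz pt]; move: pt; rewrite -(e_fun _ _ _ exy exz) eqxx.
exact: IH ps.
Qed.

Lemma prefix_concat_code N M (om : 'I_M -> seq 'I_N) s t :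
  prefix s t -> prefix (concat_code om s) (concat_code om t).
Proof.
by case/prefixP=> r ->; rewrite /concat_code map_cat flatten_cat prefix_prefix.
Qed.

Lemma surjective_injective (T : finType) (f : T -> T) :
  (forall y, exists x, f x = y) -> injective f.
Proof.
move=> f_surj x y; apply: (@image_injP _ _ f T _) => //.
rewrite -/(codom f) (@eq_card _ _ T) // => z.
by have [u <-] := f_surj z; rewrite codom_f.
Qed.

Section ZeroOneMatrix.

Variables (N : nat) (A : zo_mat N).

Lemma top_conj_refl : top_conj A A.
Proof.
exists id, id; do 4?split => //; by move=> x n; exists n => y eq_y k /eq_y.
Qed.

Lemma irreducible_row_col : irreducible A ->
  (forall a, exists b, A a b) /\ (forall b, exists a, A a b).
Proof.
move=> A_irr; split=> [a | b].
  by have [[|x w] /andP[Aax _]] := A_irr a a; [exists a | exists x].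
have [w] := A_irr b b; rewrite /adm /= rcons_path => /andP[_ Ab].
by exists (last b w).
Qed.

Lemma functional_perm_matrix :
  (forall a, exists b, A a b) -> (forall b, exists a, A a b) ->
  (forall a b c, A a b -> A a c -> b = c) -> is_perm_matrix A.
Proof.
move=> row col A_fun; pose f a := odflt a [pick b | A a b].
have Af a b : A a b = (f a == b).
  rewrite /f; case: pickP => [x Ax | noA] /=.
    by apply/idP/eqP => [/(A_fun _ _ _ Ax) | <-].
  by have [y] := row a; rewrite noA.
have f_inj : injective f.
  apply: surjective_injective => b; have [a] := col b.
  by rewrite Af => /eqP; exists a.
by exists (perm f_inj) => i j; rewrite permE Af.
Qed.

Lemma irr_nonperm_gt0 : irr_nonperm A -> 0 < N.
Proof. by case: N A => // A0 [_ []]; exists 1%g => -[]. Qed.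

Lemma irr_nonperm_branching : irr_nonperm A ->
  exists a b c, [/\ b != c, A a b & A a c].
Proof.
case=> A_irr A_nonperm.
have [/existsP[a /existsP[b /existsP[c /and3P[]]]] | none] :=
  boolP [exists a, exists b, exists c, [&& b != c, A a b & A a c]].
  by exists a, b, c.
have [row col] := irreducible_row_col A_irr.
case: A_nonperm; apply: functional_perm_matrix => // a b c Ab Ac.
apply/eqP; apply: contraNT none => bc.
by apply/existsP; exists a; apply/existsP; exists b; apply/existsP; exists c;
  rewrite bc Ab Ac.
Qed.

Lemma adm_loop_iter a p r k :
  adm A (a :: rcons p a) -> adm A (a :: r) ->
  adm A (a :: flatten (nseq k (rcons p a)) ++ r).
Proof.
rewrite /adm /= => loop tail; elim: k => //= k IH.
by rewrite -catA cat_path last_rcons loop.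
Qed.

Lemma irr_nonperm_prefix_free_words : irr_nonperm A ->
  exists W : nat -> seq 'I_N,
    [/\ forall k, W k != [::], forall k, adm A (W k)
      & forall k l, prefix (W k) (W l) -> k = l].
Proof.
move=> A_np; have [a [b [c [bc Ab Ac]]]] := irr_nonperm_branching A_np.
have [w loop_ba] := proj1 A_np b a.
(* W k leaves the loop a b w a towards c after k turns, where W l, l > k,
   goes on to b. *)
pose L := rcons (b :: w) a.
pose W k := a :: flatten (nseq k L) ++ [:: c].
have loops k l : flatten (nseq (k + l.+1) L) =
    flatten (nseq k L) ++ b :: rcons w a ++ flatten (nseq l L).
  by rewrite nseqD flatten_cat.
have W_lt k l : k < l -> ~~ prefix (W k) (W l) && ~~ prefix (W l) (W k).
  move/subnKC <-; rewrite addSnnS /W loops -!catA.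
  by rewrite !prefix_cons !prefix_catr //= eq_sym (negbTE bc) !andbF.
exists W; split=> // [k | k l].
  by apply: (adm_loop_iter k); rewrite /adm /= ?Ab ?Ac.
move=> pkl; case: (ltngtP k l) => // /W_lt; by rewrite pkl ?andbF.
Qed.

End ZeroOneMatrix.

Section RightMarkovCode.

Variables (N : nat) (A : zo_mat N) (M : nat) (om : 'I_M -> seq 'I_N).
Hypothesis om_code : right_markov_code A om.

Lemma code_word_neq_nil i : om i != [::].
Proof.
case: om_code => _ _ om_uniq _ _; apply/eqP => om_i.
by have := om_uniq [:: i] [::]; rewrite /concat_code /= om_i => /(_ erefl).
Qed.

Lemma adm_code_mat s : adm A (concat_code om s) -> adm (code_mat A om) s.
Proof.
elim: s => // i s IH; rewrite /concat_code /= -/(concat_code om s).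
case om_i: (om i) (code_word_neq_nil i) => [//|a u] _.
case: s IH => // j s IH; rewrite /concat_code /= -/(concat_code om s).
case om_j: (om j) (code_word_neq_nil j) => [//|b v] _.
rewrite /adm /= cat_path /= => /and3P[_ Aab adm_s].
rewrite mxE om_i om_j /r_sym (lastI a u) rev_rcons /= Aab.
by apply: IH; rewrite /concat_code /= om_j.
Qed.

Lemma code_mat_irreducible : irreducible (code_mat A om).
Proof.
move=> i j; case: om_code => _ _ _ _ [_ _ om_conn].
have [s adm_s] := om_conn i j; exists s; apply: adm_code_mat.
by rewrite /concat_code /= map_rcons flatten_rcons.
Qed.

Lemma code_mat_perm_prefix_total i s t :
  is_perm_matrix (code_mat A om) ->
  adm (code_mat A om) (i :: s) -> adm (code_mat A om) (i :: t) ->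
  prefix (concat_code om (i :: s)) (concat_code om (i :: t)) ||
  prefix (concat_code om (i :: t)) (concat_code om (i :: s)).
Proof.
case=> sg Csg adm_s adm_t.
have C_fun x y z : code_mat A om x y -> code_mat A om x z -> y = z.
  by rewrite !Csg => /eqP<- /eqP.
have /orP[st | ts] := path_prefix_total C_fun adm_s adm_t;
  apply/orP; [left | right]; apply: prefix_concat_code; by rewrite prefix_cons eqxx.
Qed.

Lemma code_mat_not_perm : irr_nonperm A -> ~ is_perm_matrix (code_mat A om).
Proof.
move=> A_np C_perm; case: (om_code) => -[M_gt0 _] _ _ _ [om_complete _ _].
have [W [W_nil adm_W W_pfree]] := irr_nonperm_prefix_free_words A_np.
have complete (k : 'I_M.+1) : exists s,
    prefix (W k) (concat_code om s) && adm A (concat_code om s).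
  have [eta [adm_eta [s [eta_s _]]]] := om_complete _ (adm_W k).
  by exists s; rewrite -eta_s prefix_prefix adm_eta.
have [s s_ok] := fin_all_exists complete.
pose first_word k := head (Ordinal M_gt0) (s k).
suff : injective first_word by move/leq_card; rewrite !card_ord ltnn.
move=> k l; have /andP[pk adm_k] := s_ok k; have /andP[pl adm_l] := s_ok l.
case sk: (s k) pk adm_k => [|i tk]; first by rewrite prefixs0 (negbTE (W_nil k)).
case sl: (s l) pl adm_l => [|j tl]; first by rewrite prefixs0 (negbTE (W_nil l)).
rewrite /first_word sk sl /= => pk adm_k pl adm_l ij; subst j.
have /orP[kl | lk] := code_mat_perm_prefix_total C_perm
  (adm_code_mat adm_k) (adm_code_mat adm_l).
- have := prefix_total_of_prefix (prefix_trans pk kl) pl.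
  by case/orP=> /W_pfree/val_inj ->.
- have := prefix_total_of_prefix pk (prefix_trans pl lk).
  by case/orP=> /W_pfree/val_inj ->.
Qed.

End RightMarkovCode.

Definition letter_code (N : nat) (i : 'I_N) : seq 'I_N := [:: i].

Lemma concat_letter_code N (s : seq 'I_N) : concat_code (@letter_code N) s = s.
Proof. by elim: s => //= x s; rewrite /concat_code /= => ->. Qed.

Lemma code_mat_letter_code N (A : zo_mat N) : code_mat A (@letter_code N) = A.
Proof. by apply/matrixP => i j; rewrite mxE. Qed.

Lemma letter_code_right_markov N (A : zo_mat N) :
  irr_nonperm A -> right_markov_code A (@letter_code N).
Proof.
move=> A_np; split=> //.
- by split; [apply: irr_nonperm_gt0 A_np | move=> i j []].
- by move=> s t; rewrite !concat_letter_code.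
- by move=> i j /negbTE /= ->.
split.
- move=> g adm_g; exists [::]; rewrite cats0; split=> //.
  by exists g; split=> [|t]; rewrite concat_letter_code.
- by exists 0 => i [|//] _ _; exists [::].
- move=> i j; have [w adm_w] := proj1 A_np i j; exists w.
  by rewrite concat_letter_code /= cats1.
Qed.

Lemma code_mat_irr_nonperm N (A : zo_mat N) M (om : 'I_M -> seq 'I_N) :
  irr_nonperm A -> right_markov_code A om -> irr_nonperm (code_mat A om).
Proof.
by move=> A_np om_code; split; [apply: code_mat_irreducible | apply: code_mat_not_perm].
Qed.

Lemma coded_equiv_of_elem N M (A : zo_mat N) (B : zo_mat M) :
  elem_coded_equiv (mkz A) (mkz B) -> coded_equiv A B.
Proof. by move=> AB; have [_ [B_np _]] := AB; apply: cc_cons AB (cc_nil B_np). Qed.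

Theorem mainTheorem7 :
  (forall (N M : nat) (A : zo_mat N) (B : zo_mat M),
     irr_nonperm A -> irr_nonperm B -> top_conj A B -> coded_equiv A B) /\
  (forall (N : nat) (A : zo_mat N) (M : nat) (om : 'I_M -> seq 'I_N),
     irr_nonperm A -> right_markov_code A om ->
     coded_equiv A (code_mat A om)).
Proof.
split=> [N M A B A_np B_np AB | N A M om A_np om_code].
  apply: coded_equiv_of_elem; do 2!split=> //.
  exists N, (@letter_code N), M, (@letter_code M).
  split; [|split]; rewrite /= ?code_mat_letter_code //;
    exact: letter_code_right_markov.
have C_np := code_mat_irr_nonperm A_np om_code.
apply: coded_equiv_of_elem; do 2!split=> //.
exists M, om, M, (@letter_code M).
split; [|split]; rewrite /= ?code_mat_letter_code //;
  [exact: letter_code_right_markov | exact: top_conj_refl].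
Qed.
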